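(* Let $d>1$ be an integer. With $\mathcal{L}_d$ the vector bundle on $\mathbb{P}^5=\mathbb{P}(\wedge^2S_1)$ defined as the kernel of $\bar\tau_d\otimes 1: H^0(\mathbb{P}^3,T\mathbb{P}^3(d-1))\otimes\mathcal{O}_{\mathbb{P}^5}\to S_{d+1}\otimes\mathcal{O}_{\mathbb{P}^5}(1)$, $\varphi\otimes\omega\mapsto\omega\cdot\varphi$, let $\mathbb{P}(\mathcal{L}_d)\subset\mathbb{P}^5\times\mathbb{F}_d$ be the associated projective subbundle and $\mathbb{L}_d\subset\mathbb{F}_d$ its image under the second projection $\mathbf{p}$ (the variety of Legendrian foliations of degree $d$). Then $\mathbf{p}:\mathbb{P}(\mathcal{L}_d)\to\mathbb{L}_d$ is generically bijective; i.e. a general $\varphi\in\mathbb{L}_d$ is tangent to one and only one distribution $\omega\in\mathbb{P}^5\setminus\mathbb{G}$.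
   Context: Work over $\mathbb{C}$. Let $x_1,\dots,x_4$ be homogeneous coordinates on $\mathbb{P}^3$, $S_k$ the space of homogeneous polynomials of degree $k$ in $x_1,\dots,x_4$, $\partial_R=\sum x_i\partial_{x_i}$. The space of foliations of dimension one and degree $d$ is $\mathbb{F}_d:=\mathbb{P}(H^0(\mathbb{P}^3,T\mathbb{P}^3(d-1)))$ with $H^0(\mathbb{P}^3,T\mathbb{P}^3(d-1))=(S_d\otimes\langle\partial_{x_1},\dots,\partial_{x_4}\rangle)/(S_{d-1}\cdot\partial_R)$, elements represented by $\varphi=\sum p_i\partial_{x_i}$, $p_i\in S_d$. Points of $\mathbb{P}^5=\mathbb{P}(\wedge^2S_1)$ are degree-$0$ distributions $\omega=\sum_{i<j}\alpha_{ij}(x_jdx_i-x_idx_j)$ (antisymmetric $4\times 4$ matrices up to scalar); with $\omega=\sum a_idx_i$, set $\omega\cdot\varphi:=\sum a_ip_i\in S_{d+1}$, and $\varphi$ is tangent to $\omega$ if $\omega\cdot\varphi=0$. $\mathbb{G}\subset\mathbb{P}^5$ is the Pfaff–Plücker quadric of rank-$2$ matrices; its complement consists of contact forms (rank $4$). The kernel sheaf $\mathcal{L}_d$ is locally free on $\mathbb{P}^5$; over $\mathbb{P}^5\setminus\mathbb{G}$ its fiber at $\omega$ is $\{\varphi\mid\omega\cdot\varphi=0\}$. *)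

From HB Require Import structures.
From mathcomp Require Import all_boot all_order all_algebra.
From mathcomp Require Import mpoly.
From mathcomp Require Import complex.
From mathcomp Require Import reals.

Set Implicit Arguments.
Unset Strict Implicit.
Unset Printing Implicit Defensive.

Import Order.TTheory GRing.Theory Num.Theory.
Local Open Scope ring_scope.

Definition CC (R : realType) := complex R.

Definition mon (d : nat) := {m : 'X_{1..4 < d.+1} | mdeg (val m) == d}.

(* Index set of the coordinates of S_d (x) <d/dx_1,...,d/dx_4>. *)
Definition Jd (d : nat) := ('I_4 * mon d)%type.

(* A vector field phi = sum_i p_i d/dx_i with p_i in S_d, given by its
   coefficients: c (i, m) is the coefficient of x^m in p_i. *)
Definition vfield (R : realType) (d : nat) := Jd d -> CC R.

Definition pcomp (R : realType) (d : nat) (c : vfield R d) (i : 'I_4)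
  : {mpoly CC R [4]} :=
  \sum_(m : mon d) c (i, m) *: 'X_[val (val m)].

(* A degree-0 distribution omega = sum_{i<j} a_ij (x_j dx_i - x_i dx_j) is
   encoded by the antisymmetric 4x4 matrix A (A i j = a_ij for i<j);
   then omega = sum_i a_i dx_i with a_i = sum_j A i j x_j. *)
Definition antisym (R : realType) (A : 'M[CC R]_4) : Prop := A^T = - A.

Definition dcoef (R : realType) (A : 'M[CC R]_4) (i : 'I_4)
  : {mpoly CC R [4]} := \sum_(j < 4) A i j *: 'X_j.

Definition contract (R : realType) (d : nat) (A : 'M[CC R]_4)
  (c : vfield R d) : {mpoly CC R [4]} :=
  \sum_(i < 4) dcoef A i * pcomp c i.

Definition tangent (R : realType) (d : nat) (A : 'M[CC R]_4)
  (c : vfield R d) : Prop := contract A c = 0.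

(* omega is a contact form: a point of P^5 \ G (antisymmetric of rank 4) *)
Definition contact (R : realType) (A : 'M[CC R]_4) : Prop :=
  antisym A /\ \rank A = 4%N.

(* phi lies in S_{d-1} . partial_R, i.e. represents 0 in H^0(TP^3(d-1)) *)
Definition radial (R : realType) (d : nat) (c : vfield R d) : Prop :=
  exists g : {mpoly CC R [4]},
    g \is (d.-1).-homog /\ forall i : 'I_4, pcomp c i = g * 'X_i.

Definition peval (R : realType) (d : nat)
  (f : {mpoly CC R [#|{: Jd d}|]}) (c : vfield R d) : CC R :=
  meval (fun k => c (enum_val k)) f.

Definition zclosure (R : realType) (d : nat) (S : vfield R d -> Prop)
  (c : vfield R d) : Prop :=
  forall f : {mpoly CC R [#|{: Jd d}|]},
    (forall c', S c' -> peval f c' = 0) -> peval f c = 0.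

Definition legendrian_pt (R : realType) (d : nat) (c : vfield R d) : Prop :=
  exists A, contact A /\ tangent A c.

(* Affine cone over L_d (= p(P(L_d)) = closure of the Legendrian points) *)
Definition Lcone (R : realType) (d : nat) (c : vfield R d) : Prop :=
  zclosure (@legendrian_pt R d) c.

(* A degree-0 distribution is determined by its six coordinates a_ij (i < j), and phi is
   tangent to it iff sum a_ij (x_j p_i - x_i p_j) = 0, i.e. iff (a_ij) is orthogonal to every
   column of the coefficient matrix of the six polynomials x_j p_i - x_i p_j.  Fix five
   monomials and let v(phi) in C^6 be the generalized cross product (signed 5x5 minors) of the
   five corresponding columns; its entries are polynomials in phi.  For a Legendrian phi the
   coefficient matrix has a nonzero left kernel, so every 6x6 minor formed by the five fixed
   columns and one more column vanishes.  These are polynomial identities, so they persist on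
   the closure L_d, and they say that v(phi) is itself tangent to phi.  Take f := Pf(v(phi)):
   if f(phi) <> 0 then v(phi) is a contact form tangent to phi, and as v(phi) <> 0 the five
   columns have rank 5, which forces every tangent form to be proportional to v(phi).  An
   explicit Legendrian phi of each degree with f(phi) = 1 shows that f does not vanish on L_d. *)

From Pilot Require Import Defs.
From HB Require Import structures.
From mathcomp Require Import all_boot all_order all_algebra.
From mathcomp Require Import mpoly.
From mathcomp Require Import complex.
From mathcomp Require Import reals.
From mathcomp Require Import ring zify.
Set Implicit Arguments.
Unset Strict Implicit.
Unset Printing Implicit Defensive.
Import GRing.Theory Num.Theory.
Local Open Scope ring_scope.

Section CrossProduct.
Variables (K : fieldType) (n : nat).
Implicit Types (M : 'M[K]_(1 + n, n)) (s : 'cV[K]_(1 + n)) (u : 'rV[K]_(1 + n)).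

Definition cross M : 'rV[K]_(1 + n) :=
  \row_i cofactor (row_mx 0 M) i (lshift n ord0).

Lemma col'_row_mx s M : col' (lshift n ord0) (row_mx s M) = M.
Proof.
apply/matrixP => i j; rewrite mxE (_ : lift _ j = rshift 1 (j : 'I_n)).
  exact: row_mxEr.
exact: val_inj.
Qed.

Lemma det_row_mx_cross s M : \det (row_mx s M) = (cross M *m s) 0 0.
Proof.
rewrite (expand_det_col _ (lshift n ord0)) mxE; apply: eq_bigr => i _.
by rewrite row_mxEl mulrC mxE /cofactor !col'_row_mx.
Qed.

Lemma cross_mulmx M : cross M *m M = 0.
Proof.
apply/rowP => j; rewrite [RHS]mxE.
have -> : (cross M *m M) 0 j = (cross M *m col j M) 0 0.
  by rewrite colE mulmxA -colE [RHS]mxE.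
rewrite -det_row_mx_cross -det_tr.
apply: (determinant_alternate (i1 := lshift n ord0) (i2 := rshift 1 j)) => [|k].
  by rewrite eq_sym eq_rlshift.
by rewrite mxE [RHS]mxE row_mxEl row_mxEr mxE.
Qed.

Lemma det_row_mx_eq0 u s M :
  u != 0 -> u *m s = 0 -> u *m M = 0 -> \det (row_mx s M) = 0.
Proof.
move=> u0 us uM; apply/eqP/det0P; exists u => //.
by rewrite mul_mx_row us uM row_mx0.
Qed.

Lemma cross_kernel M u :
  cross M != 0 -> u *m M = 0 -> exists a, u = a *: cross M.
Proof.
have := cross_mulmx M; have := det_row_mx_cross^~ M.
move: (cross M) => c detc cM c0 uM.
have [i ci] : exists i, c 0 i != 0.
  apply/existsP; apply: contraNT c0 => /existsPn ci.
  by apply/eqP/rowP => i; rewrite [RHS]mxE; apply/eqP/negbNE/ci.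
exists (u 0 i / c 0 i); apply/eqP; rewrite -subr_eq0; apply/eqP.
set w := u - _ *: c; have [//|w0] := eqVneq w 0.
have wi : w *m (delta_mx i 0 : 'cV_(1 + n)) = 0.
  by apply/rowP => k; rewrite (ord1 k) -colE !mxE divfK ?subrr.
have wM : w *m M = 0 by rewrite mulmxBl -scalemxAl cM scaler0 uM subr0.
have := det_row_mx_eq0 w0 wi wM.
by rewrite detc -colE mxE => ci0; rewrite ci0 eqxx in ci.
Qed.

End CrossProduct.

Section PolynomialFunctions.
Context {R : realType} {d : nat}.
Implicit Types (F G : vfield R d -> CC R) (c : vfield R d).

Definition polyfun F := exists f, forall c, peval f c = F c.

Lemma polyfun_ext F G : F =1 G -> polyfun F -> polyfun G.
Proof. by move=> FG [f hf]; exists f => c; rewrite hf FG. Qed.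

Lemma polyfunC (a : CC R) : polyfun (fun _ => a).
Proof. by exists a%:MP => c; rewrite /peval mevalC. Qed.

Lemma polyfun_coord (J : Jd d) : polyfun (fun c => c J).
Proof. by exists 'X_(enum_rank J) => c; rewrite /peval mevalXU enum_rankK. Qed.

Lemma polyfunD F G : polyfun F -> polyfun G -> polyfun (fun c => F c + G c).
Proof.
by move=> [f hf] [g hg]; exists (f + g) => c; rewrite /peval mevalD -!/(peval _ _) hf hg.
Qed.

Lemma polyfunN F : polyfun F -> polyfun (fun c => - F c).
Proof. by move=> [f hf]; exists (- f) => c; rewrite /peval mevalN -/(peval _ _) hf. Qed.

Lemma polyfunB F G : polyfun F -> polyfun G -> polyfun (fun c => F c - G c).
Proof. by move=> hF hG; apply/polyfunD/polyfunN. Qed.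

Lemma polyfunM F G : polyfun F -> polyfun G -> polyfun (fun c => F c * G c).
Proof.
by move=> [f hf] [g hg]; exists (f * g) => c; rewrite /peval mevalM -!/(peval _ _) hf hg.
Qed.

Lemma polyfun_big {op : CC R -> CC R -> CC R} {idx : CC R} :
  (forall F G, polyfun F -> polyfun G -> polyfun (fun c => op (F c) (G c))) ->
  forall (I : Type) (r : seq I) (P : pred I) (F : I -> vfield R d -> CC R),
  (forall i, polyfun (F i)) -> polyfun (fun c => \big[op/idx]_(i <- r | P i) F i c).
Proof.
move=> hop I r P F hF; elim: r => [|i r IHr].
  by apply: polyfun_ext (polyfunC idx) => c; rewrite big_nil.
have [Pi|nPi] := boolP (P i).
  by apply: polyfun_ext (hop _ _ (hF i) IHr) => c; rewrite big_cons Pi.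
by apply: polyfun_ext IHr => c; rewrite big_cons (negbTE nPi).
Qed.

Lemma polyfun_det n (M : vfield R d -> 'M[CC R]_n) :
  (forall i j, polyfun (fun c => M c i j)) -> polyfun (fun c => \det (M c)).
Proof.
move=> hM; rewrite /determinant; apply: (polyfun_big polyfunD) => s.
apply/polyfunM; first exact: polyfunC.
by apply: (polyfun_big polyfunM) => i; apply: hM.
Qed.

Lemma polyfun_cross n (M : vfield R d -> 'M[CC R]_(1 + n, n)) :
  (forall i j, polyfun (fun c => M c i j)) ->
  forall i, polyfun (fun c => cross (M c) 0 i).
Proof.
move=> hM i.
apply: polyfun_ext (polyfunM (polyfunC ((-1) ^+ (i + lshift n ord0)))
                     (polyfun_det (M := fun c => row' i (M c)) _)) => [c|a b].
  by rewrite mxE /cofactor col'_row_mx.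
by apply: polyfun_ext (hM (lift i a) b) => c; rewrite mxE.
Qed.

Lemma polyfun_row_mx m n1 n2 (X : vfield R d -> 'M[CC R]_(m, n1))
    (Y : vfield R d -> 'M[CC R]_(m, n2)) :
  (forall i j, polyfun (fun c => X c i j)) -> (forall i j, polyfun (fun c => Y c i j)) ->
  forall i j, polyfun (fun c => row_mx (X c) (Y c) i j).
Proof.
move=> hX hY i j; rewrite -(splitK j); case: (split j) => k /=.
  by apply: polyfun_ext (hX i k) => c; rewrite row_mxEl.
by apply: polyfun_ext (hY i k) => c; rewrite row_mxEr.
Qed.

Lemma legendrian_Lcone c : legendrian_pt c -> Lcone c.
Proof. by move=> hc f; apply. Qed.

Lemma Lcone_polyfun_eq0 F c :
  polyfun F -> (forall c', legendrian_pt c' -> F c' = 0) -> Lcone c -> F c = 0.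
Proof. by move=> [f hf] F0 hc; rewrite -hf; apply: hc => c' /F0; rewrite hf. Qed.

End PolynomialFunctions.

Definition o0 : 'I_4 := @Ordinal 4 0 isT.
Definition o1 : 'I_4 := @Ordinal 4 1 isT.
Definition o2 : 'I_4 := @Ordinal 4 2 isT.
Definition o3 : 'I_4 := @Ordinal 4 3 isT.
Definition q0 : 'I_6 := @Ordinal 6 0 isT.
Definition q1 : 'I_6 := @Ordinal 6 1 isT.
Definition q2 : 'I_6 := @Ordinal 6 2 isT.
Definition q3 : 'I_6 := @Ordinal 6 3 isT.
Definition q4 : 'I_6 := @Ordinal 6 4 isT.
Definition q5 : 'I_6 := @Ordinal 6 5 isT.

Lemma ord4P (i : 'I_4) : [\/ i = o0, i = o1, i = o2 | i = o3].
Proof.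
by case: i => [[|[|[|[|//]]]] hi]; [apply: Or41 | apply: Or42 | apply: Or43 | apply: Or44];
  apply: val_inj.
Qed.

Lemma ord6P (k : 'I_6) : k = q0 \/ k = q1 \/ k = q2 \/ k = q3 \/ k = q4 \/ k = q5.
Proof.
case: k => [[|[|[|[|[|[|//]]]]]] hk];
  [left | right; left | do 2 right; left | do 3 right; left | do 4 right; left
  | do 5 right]; exact: val_inj.
Qed.

Lemma big_ord4 (V : nmodType) (F : 'I_4 -> V) :
  \sum_(i < 4) F i = F o0 + F o1 + F o2 + F o3.
Proof.
by rewrite !big_ord_recl big_ord0 addr0 !addrA; congr (_ + _ + _ + _); congr F; apply: val_inj.
Qed.

Lemma big_ord6 (V : nmodType) (F : 'I_6 -> V) :
  \sum_(k < 6) F k = F q0 + F q1 + F q2 + F q3 + F q4 + F q5.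
Proof.
rewrite !big_ord_recl big_ord0 addr0 !addrA.
by congr (_ + _ + _ + _ + _ + _); congr F; apply: val_inj.
Qed.

Section SkewMatrices.
Variable R : realType.
Implicit Types (A : 'M[CC R]_4) (u : 'rV[CC R]_6).

Definition pair_fst (k : 'I_6) : 'I_4 :=
  match val k with 0 | 1 | 2 => o0 | 3 | 4 => o1 | _ => o2 end.
Definition pair_snd (k : 'I_6) : 'I_4 :=
  match val k with 0 => o1 | 1 | 3 => o2 | _ => o3 end.

Definition skew_coords A : 'rV[CC R]_6 := \row_k A (pair_fst k) (pair_snd k).

Definition skew_entry u (i j : nat) : CC R :=
  match i, j with
  | 0, 1 => u 0 q0 | 1, 0 => - u 0 q0
  | 0, 2 => u 0 q1 | 2, 0 => - u 0 q1
  | 0, 3 => u 0 q2 | 3, 0 => - u 0 q2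
  | 1, 2 => u 0 q3 | 2, 1 => - u 0 q3
  | 1, 3 => u 0 q4 | 3, 1 => - u 0 q4
  | 2, 3 => u 0 q5 | 3, 2 => - u 0 q5
  | _, _ => 0 end.

Definition skew_mx u : 'M[CC R]_4 := \matrix_(i, j) skew_entry u i j.

Definition pfaffian u : CC R := u 0 q0 * u 0 q5 - u 0 q1 * u 0 q4 + u 0 q2 * u 0 q3.

Definition skew_adj u : 'rV[CC R]_6 :=
  \row_k match val k with
         | 0 => u 0 q5 | 1 => - u 0 q4 | 2 => u 0 q3
         | 3 => u 0 q2 | 4 => - u 0 q1 | _ => u 0 q0 end.

Lemma antisym_entry A i j : antisym A -> A j i = - A i j.
Proof. by move=> /(congr1 (fun M : 'M[CC R]_4 => M i j)); rewrite !mxE. Qed.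

Lemma antisym_diag A i : antisym A -> A i i = 0.
Proof.
move=> /(antisym_entry i i) /eqP; rewrite -subr_eq0 opprK -mulr2n -mulr_natr.
by rewrite mulf_eq0 pnatr_eq0 orbF => /eqP.
Qed.

Lemma nonzero_of_pfaffian u : pfaffian u != 0 -> u != 0.
Proof. by apply: contraNneq => ->; rewrite /pfaffian !mxE !mul0r subrr addr0. Qed.

Lemma skew_mx_antisym u : antisym (skew_mx u).
Proof.
apply/matrixP => i j; rewrite !mxE.
by case: (ord4P i) => ->; case: (ord4P j) => ->; rewrite /= ?opprK ?oppr0.
Qed.

Lemma skew_mxK u : skew_coords (skew_mx u) = u.
Proof.
apply/rowP => k; rewrite !mxE.
by case: (ord6P k) => [|[|[|[|[|]]]]] ->.
Qed.

Lemma skew_coordsK A : antisym A -> skew_mx (skew_coords A) = A.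
Proof.
move=> hA; apply/matrixP => i j; rewrite !mxE.
case: (ord4P i) => ->; case: (ord4P j) => -> /=; rewrite ?mxE /= ?antisym_diag //;
  by rewrite (antisym_entry _ _ hA) ?opprK.
Qed.

Lemma skew_mxZ a u : skew_mx (a *: u) = a *: skew_mx u.
Proof.
apply/matrixP => i j; rewrite !mxE.
by case: (ord4P i) => ->; case: (ord4P j) => -> /=; rewrite ?mxE ?mulrN ?mulr0.
Qed.

Lemma skew_mx_adj u : skew_mx u *m skew_mx (skew_adj u) = (- pfaffian u)%:M.
Proof.
apply/matrixP => i j; rewrite !mxE big_ord4 /pfaffian /skew_adj.
by case: (ord4P i) => ->; case: (ord4P j) => -> /=; rewrite !mxE /= ?mxE /= ?mulr1n ?mulr0n; ring.
Qed.

Lemma contact_skew_mx u : pfaffian u != 0 -> contact (skew_mx u).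
Proof.
move=> pf0; split; first exact: skew_mx_antisym.
apply: mxrank_unit.
have : skew_mx u *m ((- pfaffian u)^-1 *: skew_mx (skew_adj u)) = 1%:M.
  by rewrite -scalemxAr skew_mx_adj scale_scalar_mx mulVf // oppr_eq0.
by case/mulmx1_unit.
Qed.

Lemma skew_coords_contact_neq0 A : contact A -> skew_coords A != 0.
Proof.
case=> hA rk4; apply/eqP => A0; move: rk4; rewrite -(skew_coordsK hA) A0.
have -> : skew_mx 0 = 0.
  by apply/matrixP => i j; rewrite !mxE; case: (ord4P i) => ->; case: (ord4P j) => -> /=;
    rewrite ?mxE ?oppr0.
by rewrite mxrank0.
Qed.

End SkewMatrices.

Section Tangency.
Context {R : realType} {d : nat}.
Implicit Types (c : vfield R d) (u : 'rV[CC R]_6) (A : 'M[CC R]_4).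

Definition wedge c (k : 'I_6) : {mpoly CC R [4]} :=
  'X_(pair_snd k) * Defs.pcomp c (pair_fst k) - 'X_(pair_fst k) * Defs.pcomp c (pair_snd k).

Lemma contract_skew A c :
  antisym A -> contract A c = \sum_k skew_coords A 0 k *: wedge c k.
Proof.
move=> hA; rewrite /contract big_ord4 /dcoef !big_ord4 big_ord6 !mxE /wedge /=.
rewrite (antisym_entry o0 o1 hA) (antisym_entry o0 o2 hA) (antisym_entry o0 o3 hA).
rewrite (antisym_entry o1 o2 hA) (antisym_entry o1 o3 hA) (antisym_entry o2 o3 hA).
by rewrite !antisym_diag // -!mul_mpolyC !mpolyCN; ring.
Qed.

Lemma tangent_skew_mx u c : tangent (skew_mx u) c <-> \sum_k u 0 k *: wedge c k = 0.
Proof. by rewrite /tangent contract_skew ?skew_mxK //; apply: skew_mx_antisym. Qed.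

Lemma tangent_skew_coords A c :
  contact A -> tangent A c -> \sum_k skew_coords A 0 k *: wedge c k = 0.
Proof. by case=> hA _; rewrite -tangent_skew_mx skew_coordsK. Qed.

Lemma radial_wedge c k : radial c -> wedge c k = 0.
Proof. by case=> g [_ hg]; rewrite /wedge !hg; ring. Qed.

Definition wedge_coefs c (mu : 'X_{1..4}) : 'cV[CC R]_6 := \col_k (wedge c k)@_mu.

Definition wedge_mx (ms : 'I_5 -> 'X_{1..4}) c : 'M[CC R]_(1 + 5, 5) :=
  \matrix_(k, j) (wedge c k)@_(ms j).

Lemma mulmx_wedge_coefs u c mu :
  (u *m wedge_coefs c mu) 0 0 = (\sum_k u 0 k *: wedge c k)@_mu.
Proof. by rewrite mxE raddf_sum /=; apply: eq_bigr => k _; rewrite mxE mcoeffZ. Qed.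

Lemma mulmx_wedge_mx u ms c j :
  (u *m wedge_mx ms c) 0 j = (\sum_k u 0 k *: wedge c k)@_(ms j).
Proof. by rewrite mxE raddf_sum /=; apply: eq_bigr => k _; rewrite mxE mcoeffZ. Qed.

Lemma polyfun_wedge_coef k mu : polyfun (fun c => (wedge c k)@_mu).
Proof.
have pcompP i j : polyfun (fun c => ('X_j * Defs.pcomp c i)@_mu).
  apply: polyfun_ext (polyfun_big polyfunD (index_enum (mon d)) predT
           (fun m => polyfunM (polyfun_coord (i, m))
                       (polyfunC (('X_j * 'X_[val (val m)] : {mpoly CC R [4]})@_mu)))) => c.
  by rewrite /Defs.pcomp mulr_sumr raddf_sum /=; apply: eq_bigr => m _; rewrite -scalerAr mcoeffZ.
by apply: polyfun_ext (polyfunB (pcompP _ _) (pcompP _ _)) => c; rewrite /wedge mcoeffB.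
Qed.

End Tangency.

Section LegendrianCone.
Variables (R : realType) (d : nat) (ms : 'I_5 -> 'X_{1..4}).
Implicit Types (c : vfield R d) (A B : 'M[CC R]_4).

Definition legendre_vec c : 'rV[CC R]_6 := cross (wedge_mx ms c).

Lemma polyfun_legendre_vec k : polyfun (fun c => legendre_vec c 0 k).
Proof.
apply: polyfun_cross => i j.
by apply: polyfun_ext (polyfun_wedge_coef i (ms j)) => c; rewrite mxE.
Qed.

Lemma polyfun_pfaffian_legendre_vec : polyfun (fun c => pfaffian (legendre_vec c)).
Proof.
by apply: polyfunD; first apply: polyfunB; apply: polyfunM; apply: polyfun_legendre_vec.
Qed.

Lemma legendrian_det c mu :
  legendrian_pt c -> \det (row_mx (wedge_coefs c mu) (wedge_mx ms c)) = 0.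
Proof.
case=> A [hA /(tangent_skew_coords hA) tA].
apply: (det_row_mx_eq0 (skew_coords_contact_neq0 hA)); apply/rowP => j.
  by rewrite (ord1 j) mulmx_wedge_coefs tA mcoeff0 mxE.
by rewrite mulmx_wedge_mx tA mcoeff0 mxE.
Qed.

Lemma Lcone_legendre_vec c : Lcone c -> \sum_k legendre_vec c 0 k *: wedge c k = 0.
Proof.
move=> hc; apply/mpolyP => mu; rewrite mcoeff0 -mulmx_wedge_coefs -det_row_mx_cross.
apply: (Lcone_polyfun_eq0 _ (legendrian_det^~ mu) hc).
apply: polyfun_det => i j.
apply: (polyfun_row_mx (X := fun c => wedge_coefs c mu) (Y := wedge_mx ms)) => k l;
  by apply: polyfun_ext (polyfun_wedge_coef k _) => c'; rewrite mxE.
Qed.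

Lemma Lcone_contact c :
  Lcone c -> pfaffian (legendre_vec c) != 0 -> exists A, contact A /\ tangent A c.
Proof.
move=> hc pf0; exists (skew_mx (legendre_vec c)); split; first exact: contact_skew_mx.
by apply/tangent_skew_mx/Lcone_legendre_vec.
Qed.

Lemma tangent_contact_unique c A B :
  legendre_vec c != 0 -> contact A -> contact B -> tangent A c -> tangent B c ->
  exists l, l != 0 /\ B = l *: A.
Proof.
move=> v0.
have coords X : contact X -> tangent X c ->
    exists2 l, l != 0 & skew_coords X = l *: legendre_vec c.
  move=> hX /(tangent_skew_coords hX) tX.
  have [|l Xl] := @cross_kernel _ _ (wedge_mx ms c) (skew_coords X) v0.
    by apply/rowP => j; rewrite mulmx_wedge_mx tX mcoeff0 mxE.
  exists l => //; apply: contraTneq (skew_coords_contact_neq0 hX) => l0.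
  by rewrite Xl l0 scale0r eqxx.
move=> hA hB /(coords _ hA) [lA lA0 eA] /(coords _ hB) [lB lB0 eB].
exists (lB / lA); split; first by rewrite mulf_neq0 ?invr_eq0.
by rewrite -(skew_coordsK hA.1) -(skew_coordsK hB.1) eA eB !skew_mxZ scalerA divfK.
Qed.

End LegendrianCone.

Definition mon4 (a b c e : nat) : 'X_{1..4} := [multinom nth 0%N [:: a; b; c; e] i | i < 4].

Lemma mnm4_eq (m m' : 'X_{1..4}) :
  (m == m') = [&& m o0 == m' o0, m o1 == m' o1, m o2 == m' o2 & m o3 == m' o3].
Proof.
apply/eqP/and4P => [-> //|[/eqP e0 /eqP e1 /eqP e2 /eqP e3]].
by apply/mnmP => i; case: (ord4P i) => ->.
Qed.

Lemma mdeg_mon4 a b c e : mdeg (mon4 a b c e) = (a + b + c + e)%N.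
Proof. by rewrite mdegE big_ord4 !mnmE. Qed.

Lemma mpolyX_mon4 (R : realType) a b c e :
  ('X_[mon4 a b c e] : {mpoly CC R [4]}) = 'X_o0 ^+ a * 'X_o1 ^+ b * 'X_o2 ^+ c * 'X_o3 ^+ e.
Proof.
have -> : mon4 a b c e = (U_(o0) *+ a + U_(o1) *+ b + U_(o2) *+ c + U_(o3) *+ e)%MM.
  by apply/mnmP => i; rewrite !mnmDE !mulmnE !mnm1E mnmE; case: (ord4P i) => -> /=; lia.
by rewrite !mpolyXD !mpolyXn.
Qed.

Lemma mon_of_mdeg d (m : 'X_{1..4}) : mdeg m = d -> exists mi : mon d, val (val mi) = m.
Proof.
move=> dm; have bm : (mdeg m < d.+1)%N by rewrite dm.
by exists (exist _ (BMultinom bm) (introT eqP dm)).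
Qed.

Section Witness.
Variables (R : realType) (n : nat).

Definition witness_exps (i : 'I_4) : 'X_{1..4} :=
  match val i with
  | 0 => mon4 n.+1 0 0 1 | 1 => mon4 0 0 n.+2 0 | 2 => mon4 n.+1 1 0 0 | _ => mon4 1 0 n.+1 0
  end.

Definition witness_sign (i : 'I_4) : CC R := match val i with 0 | 1 => 1 | _ => -1 end.

(* phi = x0^(n+1) x3 d0 + x2^(n+2) d1 - x0^(n+1) x1 d2 - x0 x2^(n+1) d3, which is tangent to
   the contact form x1 dx0 - x0 dx1 + x3 dx2 - x2 dx3. *)
Definition witness : vfield R n.+2 :=
  fun J => if val (val J.2) == witness_exps J.1 then witness_sign J.1 else 0.

Lemma pcomp_witness i : Defs.pcomp witness i = witness_sign i *: 'X_[witness_exps i].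
Proof.
have [mi emi] : exists mi : mon n.+2, val (val mi) = witness_exps i.
  by apply: mon_of_mdeg; case: (ord4P i) => ->; rewrite /witness_exps /= mdeg_mon4; lia.
rewrite /Defs.pcomp (bigD1 mi) //= big1 ?addr0; first by rewrite /witness /= emi eqxx.
move=> m /eqP mmi; rewrite /witness /=; case: eqP => [em|]; last by rewrite scale0r.
by case: mmi; apply/val_inj/val_inj; rewrite /= em emi.
Qed.

Lemma wedge_witness_coef k mu :
  (wedge witness k)@_mu =
    witness_sign (pair_fst k) * (U_(pair_snd k) + witness_exps (pair_fst k) == mu)%MM%:R
  - witness_sign (pair_snd k) * (U_(pair_fst k) + witness_exps (pair_snd k) == mu)%MM%:R.
Proof. by rewrite /wedge !pcomp_witness -!scalerAr mcoeffB !mcoeffZ -!mpolyXD !mcoeffX. Qed.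

Definition witness_mons (j : 'I_5) : 'X_{1..4} :=
  match val j with
  | 0 => mon4 n.+1 0 1 1 | 1 => mon4 n.+1 0 0 2 | 2 => mon4 n.+1 2 0 0
  | 3 => mon4 0 0 n.+2 1 | _ => mon4 n.+1 1 0 1 end.

Definition witness_wedge_mx : 'M[CC R]_(1 + 5, 5) :=
  \matrix_(k, j) if j == 4 :> nat then (k == 0 :> nat)%:R - (k == 5 :> nat)%:R
                 else (k == j.+1 :> nat)%:R.

Lemma wedge_mx_witness : wedge_mx witness_mons witness = witness_wedge_mx.
Proof.
apply/matrixP => k j; rewrite !mxE wedge_witness_coef !mnm4_eq.
case: (ord6P k) => [|[|[|[|[|]]]]] ->; case: j => [[|[|[|[|[|//]]]]] hj];
  rewrite /= !mnmDE !mnm1E !mnmE /= ?add0n ?addn0 ?eqxx ?eqSS ?andbF ?andbT ?andFb /=;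
  by rewrite /witness_sign /pair_fst /pair_snd /= ?mulr1 ?mulr0 ?subr0 ?sub0r ?opprK.
Qed.

Definition witness_frame : 'M[CC R]_(1 + 5) :=
  \matrix_(i, j) if j == 0 :> nat then (i == 0 :> nat)%:R
                 else if j == 5 :> nat then (i == 0 :> nat)%:R - (i == 5 :> nat)%:R
                 else (i == j :> nat)%:R.

Lemma row_mx_witness_wedge_mx :
  row_mx (delta_mx q0 0) witness_wedge_mx = witness_frame.
Proof.
apply/matrixP => i j; rewrite -(splitK j); case: split => [j0|l].
  by rewrite /= row_mxEl !mxE (ord1 j0) andbT.
rewrite /=; transitivity (witness_wedge_mx i l); first exact: row_mxEr.
by rewrite !mxE /= -[(1 + l)%N]/(l.+1) eqSS.
Qed.

Lemma det_witness_frame : \det witness_frame = -1.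
Proof.
rewrite -det_tr det_trig.
  by rewrite !big_ord_recl big_ord0 !mxE /= !mul1r mulr1 sub0r.
apply/is_trig_mxP => i j lt_ij; rewrite !mxE (gtn_eqF lt_ij).
case: eqP => [i0|_]; first by rewrite -i0 (gtn_eqF lt_ij).
by case: eqP => // i5; have := ltn_ord j; lia.
Qed.

Lemma pfaffian_cross_witness : pfaffian (cross witness_wedge_mx) = 1.
Proof.
have c0 : cross witness_wedge_mx 0 q0 = -1.
  by rewrite -det_witness_frame -row_mx_witness_wedge_mx det_row_mx_cross -colE [RHS]mxE.
have := cross_mulmx witness_wedge_mx; move: (cross _) c0 => c c0 /rowP cW.
have := cW 0; have := cW 1; have := cW 2; have := cW 3; have := cW 4.
rewrite !mxE !big_ord6 !mxE /= !mulr0 !mulr1 !addr0 !add0r.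
rewrite subr0 oppr0 !mulr0 !addr0 mulrN1 mulr1 => /eqP; rewrite subr_eq0 => /eqP c5 c4 c3 c2 c1.
by rewrite /pfaffian -c5 c0 c1 c4 c2 !mul0r subr0 addr0 mulrNN mulr1.
Qed.

Definition witness_form : 'rV[CC R]_6 := delta_mx 0 q0 + delta_mx 0 q5.

Lemma pfaffian_witness_form : pfaffian witness_form = 1.
Proof. by rewrite /pfaffian !mxE /=; ring. Qed.

Lemma witness_form_sum (V : lmodType (CC R)) (F : 'I_6 -> V) :
  \sum_k witness_form 0 k *: F k = F q0 + F q5.
Proof. by rewrite big_ord6 !mxE /= !(scale0r, scale1r, addr0, add0r). Qed.

Lemma witness_legendrian : legendrian_pt witness.
Proof.
exists (skew_mx witness_form); split.
  by apply: contact_skew_mx; rewrite pfaffian_witness_form oner_neq0.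
apply/tangent_skew_mx; rewrite witness_form_sum /wedge.
rewrite -[pair_fst q0]/o0 -[pair_snd q0]/o1 -[pair_fst q5]/o2 -[pair_snd q5]/o3.
rewrite !pcomp_witness -[witness_sign o0]/1 -[witness_sign o1]/1.
rewrite -[witness_sign o2]/(-1) -[witness_sign o3]/(-1).
rewrite -[witness_exps o0]/(mon4 n.+1 0 0 1) -[witness_exps o1]/(mon4 0 0 n.+2 0).
rewrite -[witness_exps o2]/(mon4 n.+1 1 0 0) -[witness_exps o3]/(mon4 1 0 n.+1 0).
by rewrite !mpolyX_mon4 !scale1r !scaleN1r !exprS; ring.
Qed.

Lemma witness_nonradial : ~ radial witness.
Proof.
move=> /radial_wedge w0; have := congr1 (fun M : 'M_(1 + 5, 5) => M q1 0) wedge_mx_witness.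
by rewrite !mxE w0 mcoeff0 /= => /eqP; rewrite eq_sym oner_eq0.
Qed.

End Witness.

Arguments witness : clear implicits.

Theorem proposition7p4 (R : realType) (d : nat) (hd : (1 < d)%N) :
  exists f : {mpoly CC R [#|{: Jd d}|]},
    (exists c : vfield R d, Lcone c /\ ~ radial c /\ peval f c <> 0) /\
    (forall c : vfield R d, Lcone c -> ~ radial c -> peval f c <> 0 ->
       (exists A, contact A /\ tangent A c) /\
       (forall A B : 'M[CC R]_4, contact A -> contact B ->
          tangent A c -> tangent B c ->
          exists lambda : CC R, lambda != 0 /\ B = lambda *: A)).
Proof.
case: d hd => [|[|n]] // _.
have [f hf] := polyfun_pfaffian_legendre_vec R n.+2 (witness_mons n).
exists f; split.
  exists (witness R n); split; first exact/legendrian_Lcone/witness_legendrian.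
  split; first exact: witness_nonradial.
  rewrite hf /legendre_vec wedge_mx_witness pfaffian_cross_witness.
  by apply/eqP; rewrite oner_eq0.
(* Non-radiality is only needed for the witness. *)
move=> c hc _; rewrite hf => /eqP pf0.
split; first exact: (Lcone_contact hc pf0).
by move=> A B; exact: (tangent_contact_unique (nonzero_of_pfaffian pf0)).
Qed.
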